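(* Let $F\colon\mathcal{X}\to\mathcal{Y}$ be a uniformly expansive map of families of metric spaces. Suppose there is an ordinal $\alpha$ such that $F^{-1}(\mathcal{B})\in\mathfrak{C}_\alpha$ for every bounded family $\mathcal{B}\prec\mathcal{Y}$. If $\mathcal{Y}\in\mathfrak{C}_\beta$ for some ordinal $\beta$, then $\mathcal{X}\in\mathfrak{C}_{\alpha+\beta}$ (ordinal sum).
   Context: A map $F\colon\mathcal{X}\to\mathcal{Y}$ of families is a collection of maps $f\colon X_f\to Y_f$ with $\{X_f\}_{f\in F}=\mathcal{X}$ and $Y_f\in\mathcal{Y}$; $F^{-1}(\mathcal{B})=\{f^{-1}(B)\colon f\in F,B\in\mathcal{B}\}$ (with induced metrics). $F$ is uniformly expansive if there is a non-decreasing $\rho\colon[0,\infty)\to[0,\infty)$ with $d(f(x),f(x'))\le\rho(d(x,x'))$ for all $f\in F$, $x,x'\in X_f$. $\mathcal{B}\prec\mathcal{Y}$ means each $B\in\mathcal{B}$ is a subspace of some $Y\in\mathcal{Y}$. A family $\mathcal{U}$ of metric subspaces of $(X,d)$ is $r$-disjoint if $d(x,y)>r$ whenever $x\in U$, $y\in U'$, $U\neq U'$ in $\mathcal{U}$. For families $\mathcal{X},\mathcal{Y}$ and $R\in\mathbb{R}^{\mathbb{N}}$, $\mathcal{X}\xrightarrow{R}\mathcal{Y}$ means: there is an integer $k$ such that for each $X\in\mathcal{X}$ there are subcollections $\mathcal{U}_1,\dots,\mathcal{U}_k\subseteq\mathcal{Y}$ of subspaces of $X$, each $\mathcal{U}_i$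 being $R_i$-disjoint, with $\bigcup_i\mathcal{U}_i$ covering $X$. A family is bounded if the diameters of its members are uniformly bounded. $\mathfrak{C}_0$ is the class of bounded families; for an ordinal $\alpha>0$, $\mathfrak{C}_\alpha$ is the class of families $\mathcal{X}$ such that for every $R\in\mathbb{R}^{\mathbb{N}}$ there exist $\beta<\alpha$ and $\mathcal{Y}\in\mathfrak{C}_\beta$ with $\mathcal{X}\xrightarrow{R}\mathcal{Y}$. *)

From Stdlib Require Import Reals.
Open Scope R_scope.

Record MSpace := {
  carrier :> Type;
  mdist : carrier -> carrier -> R;
  mdist_refl : forall x, mdist x x = 0;
  mdist_sep : forall x y, mdist x y = 0 -> x = y;
  mdist_sym : forall x y, mdist x y = mdist y x;
  mdist_tri : forall x y z, mdist x z <= mdist x y + mdist y z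
}.

(** A metric space in a mfamily is a subset [S] of an ambient metric space
    [M], with the induced metric.  (A metric space [M] itself is [(M, full)].)
    This makes "subspace of a subspace" literally a subspace. *)
Definition space := { M : MSpace & carrier M -> Prop }.
Definition amb (X : space) : MSpace := projT1 X.
Definition pts (X : space) : carrier (amb X) -> Prop := projT2 X.

Definition mfamily := space -> Prop.

Definition subspace (U X : space) : Prop :=
  exists T : carrier (amb X) -> Prop,
    U = existT _ (amb X) T /\ (forall x, T x -> pts X x).

Definition prec (B Y : mfamily) : Prop :=
  forall U, B U -> exists Z, Y Z /\ subspace U Z.

Definition bounded_family (X : mfamily) : Prop :=
  exists D : R, forall Z, X Z ->
    forall x y, pts Z x -> pts Z y -> mdist (amb Z) x y <= D.

Definition pieces (Y : mfamily) (X : space) (T : carrier (amb X) -> Prop) : Prop :=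
  Y (existT _ (amb X) T) /\ (forall x, T x -> pts X x).

Definition decomposes (Rs : nat -> R) (X Y : mfamily) : Prop :=
  exists k : nat, forall Z, X Z ->
    exists U : nat -> (carrier (amb Z) -> Prop) -> Prop,
      (forall i, (1 <= i <= k)%nat -> forall T, U i T -> pieces Y Z T) /\
      (forall i, (1 <= i <= k)%nat -> forall T T', U i T -> U i T' -> T <> T' ->
          forall x y, T x -> T' y -> Rs i < mdist (amb Z) x y) /\
      (forall x, pts Z x -> exists i T, (1 <= i <= k)%nat /\ U i T /\ T x).

(** * Ordinals
    An ordinal is represented by an element [w] of a well-ordered type
    [(O, lt)]: the ordinal is the order type of the initial segment
    [{v | lt v w}].  In particular [w] represents 0 iff it has no predecessor. *)
Definition is_well_order {O : Type} (lt : O -> O -> Prop) : Prop :=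
  well_founded lt /\
  (forall x y z, lt x y -> lt y z -> lt x z) /\
  (forall x y, lt x y \/ x = y \/ lt y x).

(** [c] represents the ordinal sum [a + b]: [a <= c] and the interval
    [[a, c)] is order-isomorphic to the initial segment [[0, b)]. *)
Definition ord_sum {O : Type} (lt : O -> O -> Prop) (a b c : O) : Prop :=
  (a = c \/ lt a c) /\
  exists f : O -> O,
    (forall x, lt x b -> (a = f x \/ lt a (f x)) /\ lt (f x) c) /\
    (forall x y, lt x b -> lt y b -> lt x y -> lt (f x) (f y)) /\
    (forall y, (a = y \/ lt a y) -> lt y c -> exists x, lt x b /\ f x = y).

Inductive inC {O : Type} (lt : O -> O -> Prop) : O -> mfamily -> Prop :=
  | inC_zero : forall w X,
      (forall v, ~ lt v w) -> bounded_family X -> inC lt w X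
  | inC_succ : forall w X,
      (exists v, lt v w) ->
      (forall Rs : nat -> R, exists v Y, lt v w /\ inC lt v Y /\ decomposes Rs X Y) ->
      inC lt w X.

Record fmap := {
  fdom : space;
  fcod : space;
  fn : carrier (amb fdom) -> carrier (amb fcod)
}.

Definition is_family_map (F : fmap -> Prop) (X Y : mfamily) : Prop :=
  (forall f, F f -> forall x, pts (fdom f) x -> pts (fcod f) (fn f x)) /\
  (forall Z, X Z <-> exists f, F f /\ fdom f = Z) /\
  (forall f, F f -> Y (fcod f)).

Definition uniformly_expansive (F : fmap -> Prop) : Prop :=
  exists rho : R -> R,
    (forall a b, 0 <= a -> a <= b -> rho a <= rho b) /\
    (forall a, 0 <= a -> 0 <= rho a) /\
    (forall f, F f -> forall x x', pts (fdom f) x -> pts (fdom f) x' ->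
       mdist (amb (fcod f)) (fn f x) (fn f x') <= rho (mdist (amb (fdom f)) x x')).

Definition preimage_family (F : fmap -> Prop) (B : mfamily) : mfamily :=
  fun U => exists f T, F f /\ B (existT _ (amb (fcod f)) T) /\
    U = existT _ (amb (fdom f)) (fun x => pts (fdom f) x /\ T (fn f x)).

(** If [beta] is zero, then [Y] is bounded, [alpha + beta = alpha],
    and every member of [X] is the preimage of a member of [Y].  Otherwise, given [R],
    decompose [Y] with the thresholds [rho o R] into a family [Y'] in [C_v] with [v < beta];
    since [F] expands distances by at most [rho], the preimages of the pieces are an
    [R]-decomposition of [X] into [F^{-1}(Y')].  Restricting [F] to these pieces gives a
    uniformly expansive map of families [F^{-1}(Y') -> Y'] whose preimages of bounded
    families are preimages under [F] of bounded families, so by induction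
    [F^{-1}(Y')] lies in [C_{alpha + v}], and [alpha + v < alpha + beta]. *)

From Stdlib Require Import Reals.
From Stdlib Require Import Lra FunctionalExtensionality PropExtensionality.
Open Scope R_scope.

Lemma mdist_ge0 (M : MSpace) (x y : M) : 0 <= mdist M x y.
Proof.
  pose proof (mdist_tri M x y x) as Htri.
  rewrite mdist_refl, (mdist_sym M y x) in Htri. lra.
Qed.

Lemma space_eta (Z : space) : existT _ (amb Z) (pts Z) = Z.
Proof. destruct Z; reflexivity. Qed.

Lemma space_ext (M : MSpace) (P Q : M -> Prop) :
  (forall x, P x <-> Q x) -> (existT _ M P : space) = existT _ M Q.
Proof.
  intros HPQ.
  replace Q with P; [reflexivity|].
  apply functional_extensionality; intros x. apply propositional_extensionality, HPQ.
Qed.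

Lemma subspace_refl (Z : space) : subspace Z Z.
Proof. exists (pts Z). split; [symmetry; apply space_eta | auto]. Qed.

Lemma subspace_trans (U V W : space) : subspace U V -> subspace V W -> subspace U W.
Proof.
  intros [T1 [-> HT1]] [T2 [-> HT2]].
  exists T1. split; [reflexivity | intros x Hx; apply HT2, HT1, Hx].
Qed.

Definition subspace_closure (C : mfamily) : mfamily :=
  fun U => exists W, C W /\ subspace U W.

Lemma bounded_family_subspace_closure (C : mfamily) :
  bounded_family C -> bounded_family (subspace_closure C).
Proof.
  intros [D HD]. exists D.
  intros U [W [HW [T [-> HT]]]] x y Hx Hy. exact (HD W HW x y (HT x Hx) (HT y Hy)).
Qed.

Lemma prec_refl (Y : mfamily) : prec Y Y.
Proof. intros U HU. exists U. split; [exact HU | apply subspace_refl]. Qed.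

Lemma prec_subspace_closure (C B Y : mfamily) :
  prec C B -> (forall W, B W -> subspace_closure Y W) -> prec (subspace_closure C) Y.
Proof.
  intros HCB HBY U [W [HW HUW]].
  destruct (HCB W HW) as [W2 [HW2 HWW2]].
  destruct (HBY W2 HW2) as [Z [HZ HW2Z]].
  exists Z. split; [exact HZ|].
  apply (subspace_trans _ _ _ HUW), (subspace_trans _ _ _ HWW2), HW2Z.
Qed.

Lemma inC_subfamily {O : Type} (lt : O -> O -> Prop) (w : O) (X X' : mfamily) :
  inC lt w X -> (forall Z, X' Z -> X Z) -> inC lt w X'.
Proof.
  intros HX Hsub. destruct HX as [w X Hzero [D HD] | w X Hpos Hdec].
  - apply inC_zero; [exact Hzero|]. exists D. intros Z HZ. apply HD, Hsub, HZ.
  - apply inC_succ; [exact Hpos|]. intros Rs.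
    destruct (Hdec Rs) as [v [Y [Hv [HY [k Hk]]]]].
    exists v, Y. repeat split; [exact Hv | exact HY|].
    exists k. intros Z HZ. apply Hk, Hsub, HZ.
Qed.

Section OrdinalSum.

Context {O : Type} (lt : O -> O -> Prop).

Lemma ord_sum_zero (a b c : O) :
  (forall v, ~ lt v b) -> ord_sum lt a b c -> c = a.
Proof.
  intros Hzero [[Hac | Hac] [g [_ [_ Hsurj]]]]; [now symmetry|].
  destruct (Hsurj a (or_introl eq_refl) Hac) as [x [Hx _]].
  exfalso. exact (Hzero x Hx).
Qed.

Hypothesis HO : is_well_order lt.

Lemma well_order_irrefl (x : O) : ~ lt x x.
Proof.
  destruct HO as [Hwf _].
  induction (Hwf x) as [x _ IH]. intros Hxx. exact (IH x Hxx Hxx).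
Qed.

Lemma ord_sum_lt (a b c v : O) :
  ord_sum lt a b c -> lt v b -> exists c', lt c' c /\ ord_sum lt a v c'.
Proof.
  destruct HO as [_ [Htrans Htotal]].
  intros [_ [g [Hrange [Hmono Hsurj]]]] Hvb.
  destruct (Hrange v Hvb) as [Hagv Hgvc].
  exists (g v). split; [exact Hgvc|]. split; [exact Hagv|].
  exists g. split; [|split].
  - intros x Hxv. split; [|apply Hmono]; eauto.
    apply (Hrange x); eauto.
  - intros x y Hx Hy. apply Hmono; eauto.
  - intros y Hay Hygv.
    destruct (Hsurj y Hay (Htrans _ _ _ Hygv Hgvc)) as [x [Hxb <-]].
    exists x. split; [|reflexivity].
    destruct (Htotal x v) as [Hxv | [-> | Hvx]]; [exact Hxv | |].
    + exfalso. exact (well_order_irrefl _ Hygv).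
    + exfalso. exact (well_order_irrefl _ (Htrans _ _ _ Hygv (Hmono v x Hvb Hxb Hvx))).
Qed.

End OrdinalSum.

Definition preimage_set (f : fmap) (T : carrier (amb (fcod f)) -> Prop) :
  carrier (amb (fdom f)) -> Prop :=
  fun x => pts (fdom f) x /\ T (fn f x).

Definition fmap_restrict (f : fmap) (T : carrier (amb (fcod f)) -> Prop) : fmap :=
  Build_fmap (existT _ (amb (fdom f)) (preimage_set f T)) (existT _ (amb (fcod f)) T) (fn f).

Definition restrict_map (F : fmap -> Prop) (B : mfamily) : fmap -> Prop :=
  fun f' => exists f T, F f /\ B (existT _ (amb (fcod f)) T) /\ f' = fmap_restrict f T.

Definition expansion_control (rho : R -> R) (F : fmap -> Prop) : Prop :=
  (forall a b, 0 <= a -> a <= b -> rho a <= rho b) /\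
  (forall a, 0 <= a -> 0 <= rho a) /\
  (forall f, F f -> forall x x', pts (fdom f) x -> pts (fdom f) x' ->
     mdist (amb (fcod f)) (fn f x) (fn f x') <= rho (mdist (amb (fdom f)) x x')).

Lemma family_map_dom_preimage (F : fmap -> Prop) (X Y : mfamily) :
  is_family_map F X Y -> forall Z, X Z -> preimage_family F Y Z.
Proof.
  intros [Hpts [HXdom HYcod]] Z HZ.
  destruct (proj1 (HXdom Z) HZ) as [f [Hf <-]].
  exists f, (pts (fcod f)). split; [exact Hf|].
  rewrite space_eta. split; [exact (HYcod f Hf)|].
  rewrite <- space_eta at 1. apply space_ext.
  intros x. split; [intros Hx; split; auto | tauto].
Qed.

Lemma is_family_map_restrict (F : fmap -> Prop) (B : mfamily) :
  is_family_map (restrict_map F B) (preimage_family F B) B.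
Proof.
  split; [|split].
  - intros f' [f [T [_ [_ ->]]]] x [_ HTx]. exact HTx.
  - intros Z. split.
    + intros [f [T [Hf [HBT ->]]]]. exists (fmap_restrict f T).
      split; [exists f, T; auto | reflexivity].
    + intros [f' [[f [T [Hf [HBT ->]]]] <-]]. exists f, T. auto.
  - intros f' [f [T [_ [HBT ->]]]]. exact HBT.
Qed.

Lemma uniformly_expansive_restrict (F : fmap -> Prop) (B : mfamily) :
  uniformly_expansive F -> uniformly_expansive (restrict_map F B).
Proof.
  intros [rho [Hmono [Hpos Hbound]]]. exists rho.
  split; [exact Hmono | split; [exact Hpos|]].
  intros f' [f [T [Hf [_ ->]]]] x x' [Hx _] [Hx' _]. exact (Hbound f Hf x x' Hx Hx').
Qed.

Lemma preimage_restrict_map (F : fmap -> Prop) (B C : mfamily) (Z : space) :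
  preimage_family (restrict_map F B) C Z -> preimage_family F (subspace_closure C) Z.
Proof.
  intros [f' [T0 [[f [T [Hf [_ ->]]]] [HCT0 ->]]]].
  exists f, (fun y => T y /\ T0 y). split; [exact Hf | split].
  - exists (existT _ (amb (fcod f)) T0). split; [exact HCT0|].
    exists (fun y => T y /\ T0 y). split; [reflexivity | intros y [_ HT0y]; exact HT0y].
  - apply space_ext. intros x. cbn. unfold preimage_set. tauto.
Qed.

Lemma inC_preimage_restrict_map {O : Type} (lt : O -> O -> Prop) (alpha : O)
    (F : fmap -> Prop) (Y Y' : mfamily) :
  (forall B, bounded_family B -> prec B Y -> inC lt alpha (preimage_family F B)) ->
  forall B, bounded_family B -> prec B (fun W => Y' W /\ subspace_closure Y W) ->
    inC lt alpha (preimage_family (restrict_map F (fun W => Y' W /\ subspace_closure Y W)) B).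
Proof.
  intros Hpre B HB HBY'.
  apply inC_subfamily with (preimage_family F (subspace_closure B)).
  - apply Hpre; [now apply bounded_family_subspace_closure|].
    apply (prec_subspace_closure _ _ Y HBY'). now intros W [_ HW].
  - apply preimage_restrict_map.
Qed.

Lemma nondecreasing_reflect_lt (rho : R -> R) (r d : R) :
  (forall a b, 0 <= a -> a <= b -> rho a <= rho b) -> 0 <= d -> rho r < rho d -> r < d.
Proof.
  intros Hmono Hd Hlt.
  destruct (Rlt_or_le r 0) as [Hr | Hr]; [lra|].
  destruct (Rlt_or_le r d) as [Hrd | Hdr]; [exact Hrd|].
  pose proof (Hmono d r Hd Hdr). lra.
Qed.

(** The pieces of [Y] are kept only when they are subspaces of members of [Y], so that
    preimages of families subordinate to them fall under the hypothesis on [F]. *)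
Lemma decomposes_preimage (F : fmap -> Prop) (X Y Y' : mfamily) (rho : R -> R)
    (Rs : nat -> R) :
  is_family_map F X Y -> expansion_control rho F ->
  decomposes (fun i => rho (Rs i)) Y Y' ->
  decomposes Rs X (preimage_family F (fun W => Y' W /\ subspace_closure Y W)).
Proof.
  intros [Hpts [HXdom HYcod]] [Hmono [_ Hbound]] [k Hk].
  exists k. intros Z HZ.
  destruct (proj1 (HXdom Z) HZ) as [f [Hf <-]].
  destruct (Hk (fcod f) (HYcod f Hf)) as [U [Hpieces [Hdisj Hcover]]].
  exists (fun i S => exists T, U i T /\ S = preimage_set f T). split; [|split].
  - intros i Hi S [T [HT ->]].
    destruct (Hpieces i Hi T HT) as [HY'T HTsub].
    split; [|intros x [Hx _]; exact Hx].
    exists f, T. split; [exact Hf|]. split; [|reflexivity].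
    split; [exact HY'T|].
    exists (fcod f). split; [exact (HYcod f Hf)|]. exists T. auto.
  - intros i Hi S S' [T [HT ->]] [T' [HT' ->]] Hne x y [Hx HTx] [Hy HTy].
    assert (HTT' : T <> T') by (intros ->; exact (Hne eq_refl)).
    apply (nondecreasing_reflect_lt rho); [exact Hmono | apply mdist_ge0|].
    eapply Rlt_le_trans; [exact (Hdisj i Hi T T' HT HT' HTT' _ _ HTx HTy)|].
    exact (Hbound f Hf x y Hx Hy).
  - intros x Hx.
    destruct (Hcover (fn f x) (Hpts f Hf x Hx)) as [i [T [Hi [HT HTx]]]].
    exists i, (preimage_set f T). split; [exact Hi|].
    split; [exists T; auto | split; assumption].
Qed.

Theorem mainTheorem11
  (O : Type) (lt : O -> O -> Prop) (HO : is_well_order lt)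
  (X Y : mfamily) (F : fmap -> Prop)
  (HF : is_family_map F X Y) (Hexp : uniformly_expansive F)
  (alpha beta gamma : O) (Hsum : ord_sum lt alpha beta gamma)
  (Hpre : forall B : mfamily, bounded_family B -> prec B Y ->
            inC lt alpha (preimage_family F B))
  (HY : inC lt beta Y) :
  inC lt gamma X.
Proof.
  revert X Y F HF Hexp gamma Hsum Hpre HY.
  induction (proj1 HO beta) as [beta _ IH].
  intros X Y F HF Hexp gamma Hsum Hpre HY.
  destruct HY as [beta Y Hzero Hbd | beta Y [v0 Hv0] Hdec].
  - rewrite (ord_sum_zero lt alpha beta gamma Hzero Hsum).
    apply inC_subfamily with (preimage_family F Y).
    + apply Hpre; [exact Hbd | apply prec_refl].
    + exact (family_map_dom_preimage F X Y HF).
  - destruct (ord_sum_lt lt HO _ _ _ _ Hsum Hv0) as [c0 [Hc0 _]].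
    apply inC_succ; [exists c0; exact Hc0|]. intros Rs.
    pose proof Hexp as [rho Hrho].
    destruct (Hdec (fun i => rho (Rs i))) as [v [Y' [Hv [HY' HYY']]]].
    destruct (ord_sum_lt lt HO _ _ _ _ Hsum Hv) as [c [Hc Hsumc]].
    set (Y2 := fun W => Y' W /\ subspace_closure Y W).
    exists c, (preimage_family F Y2). split; [exact Hc | split].
    + apply (IH v Hv _ Y2 (restrict_map F Y2) (is_family_map_restrict F Y2)
               (uniformly_expansive_restrict F Y2 Hexp) c Hsumc).
      * exact (inC_preimage_restrict_map lt alpha F Y Y' Hpre).
      * apply inC_subfamily with Y'; [exact HY' | now intros W [HW _]].
    + exact (decomposes_preimage F X Y Y' rho Rs HF Hrho HYY').
Qed.
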